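(* Let $\mathcal{C}\le\mathbb{F}_q^n$ be a linear code of even length $n$ with $q\neq 2$, and suppose $W_\mathcal{C}(x)=(x^2+a)^{n/2}$ for some $a\in\mathbb{R}\setminus\{0\}$. Then $a=q-1$ and $\mathcal{C}$ is monomially equivalent to $\bigoplus_{i=1}^{n/2}\langle(1,1)\rangle_{\mathbb{F}_q}$.
   Context: $W_\mathcal{C}(x)=\sum_{c\in\mathcal{C}}x^{n-\mathrm{wt}(c)}$, where $\mathrm{wt}(c)$ is the number of nonzero coordinates of $c$. Two codes in $\mathbb{F}_q^n$ are monomially equivalent if one is the image of the other under $v\mapsto DPv$ with $D$ an invertible diagonal matrix and $P$ a permutation matrix. $\bigoplus_{i=1}^{n/2}\langle(1,1)\rangle_{\mathbb{F}_q}\le\mathbb{F}_q^n$ is the code with block-diagonal generator matrix consisting of $n/2$ blocks $(1\ 1)$. *)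

From HB Require Import structures.
From mathcomp Require Import all_boot all_order all_algebra all_fingroup all_field.
Set Implicit Arguments. Unset Strict Implicit. Unset Printing Implicit Defensive.
Import Order.TTheory GRing.Theory Num.Theory.
Local Open Scope ring_scope.

Definition wt (F : finFieldType) (n : nat) (c : 'rV[F]_n) : nat :=
  #|[set i : 'I_n | c 0 i != 0]|.

Definition weight_enum (R : nzRingType) (F : finFieldType) (n : nat)
  (C : {vspace 'rV[F]_n}) : {poly R} :=
  \sum_(c : 'rV[F]_n | c \in C) 'X^(n - wt c).

(* The monomial map v |-> D P v : coordinate i becomes d i * v (s i). *)
Definition monomial_map (F : finFieldType) (n : nat) (d : 'I_n -> F) (s : 'S_n)
  (v : 'rV[F]_n) : 'rV[F]_n := \row_i (d i * v 0 (s i)).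

Definition mon_equiv (F : finFieldType) (n : nat) (C1 C2 : {vspace 'rV[F]_n}) : Prop :=
  exists (d : 'I_n -> F) (s : 'S_n),
    (forall i, d i != 0) /\
    (forall w, w \in C2 <-> exists2 v, v \in C1 & w = monomial_map d s v).

(* Generator row i of the block-diagonal matrix with blocks (1 1):
   ones exactly in coordinates 2i and 2i+1. *)
Definition pair_row (F : finFieldType) (n i : nat) : 'rV[F]_n :=
  \row_(j < n) (if (j : nat)./2 == i then 1 else 0).

Definition pair_code (F : finFieldType) (n : nat) : {vspace 'rV[F]_n} :=
  <<[seq pair_row F n i | i <- iota 0 n./2]>>%VS.

From HB Require Import structures.
From mathcomp Require Import all_boot all_order all_algebra all_fingroup all_field.
From mathcomp Require Import zify.
Set Implicit Arguments. Unset Strict Implicit. Unset Printing Implicit Defensive.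
Import Order.TTheory GRing.Theory Num.Theory.
Local Open Scope ring_scope.

(* Only even powers of x occur in (x^2 + a)^(n/2), so every codeword has even weight.
   Let g be a word of weight 2 with support {i, j}, which exists because the coefficient
   a n/2 of x^(n-2) is nonzero. If a codeword c were not proportional to g on {i, j},
   then c + mu g would have weights of both parities as mu ranges over the q >= 3
   scalars; hence every codeword is proportional to g on {i, j}. Summing W_C over the
   translates c + mu g then exhibits x^2 + q - 1 as a factor of q W_C, which forces
   a = q - 1. The a n/2 = (q - 1) n/2 words of weight 2 are then exactly the q - 1
   nonzero multiples of one word on each of n/2 disjoint pairs of coordinates, every
   codeword is proportional on each pair, and rescaling and reordering the pairs maps
   C onto the pair code. *)

Lemma exists_neq2 (T : finType) (x y : T) : (2 < #|T|)%N -> exists z, (z != x) && (z != y).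
Proof.
move=> T_gt2; have : ~~ ([set: T] \subset [set x; y]).
  apply: contraL T_gt2 => /subset_leq_card; rewrite cardsT cards2 -leqNgt => h.
  by apply: leq_trans h _; case: (x != y).
by case/subsetPn => z _; rewrite !inE negb_or => ?; exists z.
Qed.

Lemma card_set_sum (T : finType) (A : {pred T}) (P : pred T) :
  #|[set x in A | P x]| = (\sum_(x in A) P x)%N.
Proof.
rewrite -sum1_card big_mkcond [RHS]big_mkcond /=; apply: eq_bigr => x _.
by rewrite !inE; case: (x \in A); case: (P x).
Qed.

Section Weights.
Variables (F : finFieldType) (n : nat).
Implicit Types (x y c g : 'rV[F]_n) (i j k : 'I_n).

Lemma wt_le x : (wt x <= n)%N.
Proof. by rewrite /wt -[n in (_ <= n)%N]card_ord max_card. Qed.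

Definition wt_out x i j := #|[set k | [&& k != i, k != j & x 0 k != 0]]|.

Lemma wt_split x i j : i != j ->
  wt x = (wt_out x i j + (x 0 i != 0)%R + (x 0 j != 0)%R)%N.
Proof.
move=> ij; rewrite /wt (cardsD1 i) (cardsD1 j) /wt_out !inE (eq_sym j) ij /=.
have -> : [set k | x 0 k != 0] :\ i :\ j = [set k | [&& k != i, k != j & x 0 k != 0]].
  by apply/setP=> k; rewrite !inE andbCA andbA.
by rewrite addnCA addnC [(_ + #|_|)%N]addnC.
Qed.

Lemma wt_out_le x i j : i != j -> (wt_out x i j + 2 <= n)%N.
Proof.
move=> ij; pose S := [set k | [&& k != i, k != j & x 0 k != 0]].
have jS : j \notin S by rewrite inE eqxx andbF.
have ijS : i \notin j |: S by rewrite !inE negb_or ij eqxx.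
by have := max_card (mem (i |: (j |: S))); rewrite card_ord !cardsU1 ijS jS /wt_out -/S; lia.
Qed.

Lemma eq_wt_out x y i j :
  (forall k, k != i -> k != j -> x 0 k = y 0 k) -> wt_out x i j = wt_out y i j.
Proof.
move=> xy; apply: eq_card => k; rewrite !inE.
by case: (k =P i) => // /eqP ki; case: (k =P j) => // /eqP kj; rewrite xy.
Qed.

Lemma wt2_supp g i j k : wt g = 2%N -> i != j -> g 0 i != 0 -> g 0 j != 0 ->
  k != i -> k != j -> g 0 k = 0.
Proof.
move=> wg ij gi gj ki kj; move: wg; rewrite (wt_split g ij) gi gj.
move=> /eqP; rewrite -[2%N]/(0 + 1 + 1)%N !eqn_add2r => /eqP/cards0_eq/setP/(_ k).
by rewrite !inE ki kj /=; apply: contraFeq.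
Qed.

Lemma wt2_partner c i : wt c = 2%N -> c 0 i != 0 -> exists2 j, j != i & c 0 j != 0.
Proof.
move=> wc ci; apply/exists_inP; apply: contraT => /exists_inPn c0.
have : [set k | c 0 k != 0] \subset [set i].
  by apply/subsetP => k; rewrite !inE; apply: contraR => /c0; rewrite negbK.
by move/subset_leq_card; rewrite -/(wt c) wc cards1.
Qed.

Lemma wt2_support g : wt g = 2%N -> exists i j, [/\ i != j, g 0 i != 0 & g 0 j != 0].
Proof.
move=> wg; have : (0 < wt g)%N by rewrite wg.
rewrite card_gt0 => /set0Pn[i]; rewrite inE => gi.
by have [j ji gj] := wt2_partner wg gi; exists i, j; rewrite eq_sym.
Qed.

Lemma wt_addZ g c (mu : F) i j : wt g = 2%N -> i != j -> g 0 i != 0 -> g 0 j != 0 ->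
  wt (c + mu *: g) =
    (wt_out c i j + (mu != - (c 0 i / g 0 i))%R + (mu != - (c 0 j / g 0 j))%R)%N.
Proof.
move=> wg ij gi gj.
have root_lin (b : F) : b != 0 -> forall a, (a + mu * b == 0) = (mu == - (a / b)).
  move=> b0 a; rewrite addrC addr_eq0 -mulNr.
  by apply/eqP/eqP => [<- | ->]; rewrite ?mulfK ?divfK.
rewrite (wt_split _ ij) !mxE !root_lin //; congr (_ + _ + _)%N.
by apply: eq_wt_out => k ki kj; rewrite !mxE (wt2_supp wg ij gi gj ki kj) mulr0 addr0.
Qed.

Definition wt2_words (C : {vspace 'rV[F]_n}) := [set c in C | wt c == 2%N].
Definition wt2_at C i := [set c in wt2_words C | c 0 i != 0].

Lemma sum_card_wt2_at C : (\sum_i #|wt2_at C i| = 2 * #|wt2_words C|)%N.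
Proof.
under eq_bigr => i _ do rewrite card_set_sum.
rewrite exchange_big /= -sum1_card big_distrr /=; apply: eq_bigr => c.
rewrite inE => /andP[_ /eqP <-]; rewrite muln1 /wt -sum1_card [RHS]big_mkcond /=.
by apply: eq_bigr => i _; rewrite inE; case: (c 0 i != 0).
Qed.

End Weights.

Lemma pair_codeP (F : finFieldType) (n : nat) (w : 'rV[F]_n) : ~~ odd n ->
  w \in pair_code F n <-> forall j j' : 'I_n, j./2 = j'./2 -> w 0 j = w 0 j'.
Proof.
move=> n_even; split.
  rewrite /pair_code => /coord_span -> j j' jj'; rewrite !summxE; apply: eq_bigr => i _.
  have i_lt : (i < size (iota 0 n./2))%N by rewrite size_iota.
  by rewrite !mxE (nth_map 0%N) // !mxE jj'.
move=> w_half; have -> : w = \sum_(j : 'I_n | ~~ odd j) w 0 j *: pair_row F n j./2.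
  apply/rowP => l; rewrite summxE.
  have l_lt : ((l./2).*2 < n)%N by have := odd_double_half l; have := ltn_ord l; lia.
  rewrite (bigD1 (Ordinal l_lt)) /=; last by rewrite odd_double.
  rewrite !mxE doubleK eqxx mulr1 big1 ?addr0; first by apply: w_half; rewrite doubleK.
  move=> j /andP[j_even jl]; rewrite !mxE; case: eqP => [jl_half|]; last by rewrite mulr0.
  case/eqP: jl; apply: val_inj => /=.
  by rewrite jl_half even_halfK.
apply: memv_suml => j j_even; apply/memvZ/memv_span/map_f.
rewrite mem_iota add0n /=.
have := odd_double_half j; have := odd_double_half n; rewrite (negbTE n_even) (negbTE j_even).
by have := ltn_ord j; rewrite -!mul2n; lia.
Qed.

Section FixedPointFreeInvolution.
Variables (n : nat) (p : 'I_n -> 'I_n).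
Hypotheses (pK : involutive p) (p_neq : forall i, p i != i).
Implicit Types i j : 'I_n.

Let lows := [set i : 'I_n | (i < p i)%N].
Let low i := if (i < p i)%N then i else p i.
Let rank i := index (low i) (enum lows).
(* The pair {i, p i} is sent to positions 2 k and 2 k + 1, where k is the rank of its
   smaller element among the smaller elements of all pairs. *)
Let code i := ((p i < i)%N + (rank i).*2)%N.

Let p_lt i : (p i < i)%N = ~~ (i < p i)%N.
Proof. by have := p_neq i; rewrite -val_eqE /=; lia. Qed.

Let low_in i : low i \in lows.
Proof. by rewrite /low inE; case: ifP => // /negbT; rewrite pK p_lt. Qed.

Let low_p i : low (p i) = low i.
Proof. by rewrite /low pK p_lt; case: (i < p i)%N. Qed.

Let eq_low i j : (low i == low j) = (j == i) || (j == p i).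
Proof.
apply/eqP/idP => [|/orP[] /eqP ->]; [|by []|by rewrite low_p].
rewrite /low; case: ifP => _; case: ifP => _ e; rewrite ?e ?pK ?eqxx ?orbT //.
by rewrite (can_inj pK e) eqxx.
Qed.

Let card_lows : (#|lows|.*2 = n)%N.
Proof.
have lowsC : ~: lows = p @: lows.
  apply/setP => i; rewrite !inE; apply/idP/imsetP => [i_high | [j]].
    by exists (p i); rewrite ?pK // inE pK p_lt.
  by rewrite inE => j_low ->; rewrite pK p_lt negbK.
by have := cardsC lows; rewrite lowsC card_imset ?card_ord ?addnn //; apply: can_inj pK.
Qed.

Let code_lt i : (code i < n)%N.
Proof.
have : (rank i < #|lows|)%N by rewrite cardE index_mem mem_enum low_in.
by have := card_lows; rewrite /code; case: (p i < i)%N; rewrite -!mul2n; lia.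
Qed.

Let half_code i : (code i)./2 = rank i.
Proof. exact: half_bit_double. Qed.

Let odd_code i : odd (code i) = (p i < i)%N.
Proof. by rewrite /code oddD odd_double addbF oddb. Qed.

Let eq_half_code i j : ((code i)./2 == (code j)./2) = (j == i) || (j == p i).
Proof.
rewrite !half_code -eq_low; apply/eqP/eqP => [|e]; last by rewrite /rank e.
by apply: index_inj; rewrite ?mem_enum ?low_in.
Qed.

Let code_inj : injective (fun i => Ordinal (code_lt i)).
Proof.
move=> i j /(congr1 val) /= e; have := eq_half_code i j; rewrite e eqxx.
case/esym/orP => /eqP // j_p; move: e => /(congr1 odd); rewrite !odd_code j_p pK p_lt.
by case: (i < p i)%N.
Qed.

Lemma involution_pairing : exists2 f : 'S_n,
  (forall i j, ((f i)./2 == (f j)./2) = (j == i) || (j == p i)) &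
  (forall i, odd (f (p i)) = ~~ odd (f i)).
Proof.
exists (perm code_inj) => [i j|i]; rewrite !permE /=; first exact: eq_half_code.
by rewrite !odd_code pK p_lt negbK.
Qed.

End FixedPointFreeInvolution.

Section EvenWeightCode.
Variables (F : finFieldType) (n : nat) (C : {vspace 'rV[F]_n}).
Hypothesis F_gt2 : (2 < #|F|)%N.
Hypothesis C_even : forall c, c \in C -> ~~ odd (wt c).
Implicit Types (c g : 'rV[F]_n) (i j : 'I_n).

Lemma wt2_proportional g i j : g \in C -> wt g = 2%N -> i != j ->
  g 0 i != 0 -> g 0 j != 0 -> forall c, c \in C -> c 0 i * g 0 j = c 0 j * g 0 i.
Proof.
move=> gC wg ij gi gj c cC; apply/eqP; rewrite -eqr_div // -eqr_opp; apply: contraT => ne.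
have [mu /andP[mu_i mu_j]] := exists_neq2 (- (c 0 i / g 0 i)) (- (c 0 j / g 0 j)) F_gt2.
have odd_wt nu : odd (wt (c + nu *: g)) = false by apply/negbTE/C_even; rewrite memvD ?memvZ.
have := odd_wt mu; have := odd_wt (- (c 0 i / g 0 i)).
by rewrite !(wt_addZ _ _ wg ij gi gj) eqxx ne mu_i mu_j /= !addn1 addn0 /= => ->.
Qed.

Lemma wt2_scale c c' i : c \in wt2_at C i -> c' \in wt2_at C i ->
  c' = (c' 0 i / c 0 i) *: c.
Proof.
rewrite !inE => /andP[/andP[cC /eqP wc] ci] /andP[/andP[cC' /eqP wc'] ci'].
have [j ji cj] := wt2_partner wc ci; have ij : i != j by rewrite eq_sym.
have prop := wt2_proportional cC wc ij ci cj cC'.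
have cj' : c' 0 j != 0.
  apply: contra_neq ci' => c'j0; move/eqP: prop.
  by rewrite c'j0 mul0r mulf_eq0 (negbTE cj) orbF => /eqP.
apply/rowP => k; rewrite !mxE.
have [-> | ki] := eqVneq k i; first by rewrite divfK.
have [-> | kj] := eqVneq k j; first by rewrite mulrAC prop mulfK.
by rewrite (wt2_supp wc ij ci cj ki kj) (wt2_supp wc' ij ci' cj' ki kj) mulr0.
Qed.

Lemma card_wt2_at_le i : (#|wt2_at C i| <= #|F| - 1)%N.
Proof.
have [-> | [c0 c0_i]] := set_0Vmem (wt2_at C i); first by rewrite cards0.
have units : #|[set: F] :\ 0| = (#|F| - 1)%N.
  by rewrite -cardsT [in RHS](cardsD1 0) inE add1n subn1.
rewrite -units; apply: leq_trans (leq_imset_card (fun l : F => l *: c0) _).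
apply/subset_leq_card/subsetP => c c_i; apply/imsetP; exists (c 0 i / c0 0 i).
  by move: c_i c0_i; rewrite !inE => /andP[_ ci] /andP[_ c0i]; rewrite mulf_neq0 ?invr_eq0.
exact: wt2_scale.
Qed.

Lemma wt2_cover : #|wt2_words C| = (n./2 * (#|F| - 1))%N -> ~~ odd n ->
  forall i, exists c, [/\ c \in C, wt c = 2%N & c 0 i != 0].
Proof.
move=> card_W n_even i.
have : (\sum_(i < n) ((#|F| - 1) - #|wt2_at C i|) = 0)%N.
  rewrite sumnB => [|k _]; last exact: card_wt2_at_le.
  by rewrite sum_card_wt2_at card_W sum_nat_const card_ord mulnA mul2n even_halfK ?subnn.
move/eqP; rewrite sum_nat_eq0 => /forallP /(_ i) /=; rewrite subn_eq0 => full.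
have : (0 < #|wt2_at C i|)%N by apply: leq_trans full; rewrite subn_gt0 ltnW.
by case/card_gt0P => c; rewrite !inE => /andP[/andP[cC /eqP wc] ci]; exists c.
Qed.

Lemma weight_enum_orbit (R : nzRingType) g i j : g \in C -> wt g = 2%N -> i != j ->
  g 0 i != 0 -> g 0 j != 0 ->
  weight_enum R C *+ #|F| =
    ('X^2 + (#|F| - 1)%:R%:P) * \sum_(c | c \in C) 'X^(n - 2 - wt_out c i j).
Proof.
move=> gC wg ij gi gj.
have -> : weight_enum R C *+ #|F| = \sum_(mu : F) \sum_(c | c \in C) 'X^(n - wt (c + mu *: g)).
  rewrite -sumr_const; apply: eq_bigr => mu _.
  rewrite /weight_enum (reindex_inj (addIr (mu *: g))).
  by apply: eq_bigl => c; rewrite /= rpredDr // memvZ.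
rewrite exchange_big mulr_sumr; apply: eq_bigr => c cC.
have ratio : - (c 0 j / g 0 j) = - (c 0 i / g 0 i).
  by congr (- _); apply/eqP; rewrite eqr_div // (wt2_proportional gC wg ij gi gj cC).
under eq_bigr => mu _ do rewrite (wt_addZ _ _ wg ij gi gj) ratio.
rewrite (bigD1 (- (c 0 i / g 0 i))) //= eqxx !addn0.
under eq_bigr => mu /negPf-> do rewrite addn1 addn1.
rewrite sumr_const cardC1 mulrDl -exprD polyC_natr mulr_natl -subn1.
have le := wt_out_le c ij.
have -> : (n - (wt_out c i j).+2 = n - 2 - wt_out c i j)%N by lia.
by have -> : (n - wt_out c i j = 2 + (n - 2 - wt_out c i j))%N by lia.
Qed.

End EvenWeightCode.

Section PairedCode.
Variables (F : finFieldType) (n : nat) (C : {vspace 'rV[F]_n}).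
Hypothesis C_prop : forall g i j, g \in C -> wt g = 2%N -> i != j ->
  g 0 i != 0 -> g 0 j != 0 -> forall c, c \in C -> c 0 i * g 0 j = c 0 j * g 0 i.
Hypothesis C_cover : forall i, exists c, [/\ c \in C, wt c = 2%N & c 0 i != 0].
Implicit Types (v w : 'rV[F]_n) (i j r : 'I_n).

Let G i : 'rV[F]_n := odflt 0 [pick c | [&& c \in C, wt c == 2%N & c 0 i != 0]].

Let G_spec i : [/\ G i \in C, wt (G i) = 2%N & G i 0 i != 0].
Proof.
rewrite /G; case: pickP => [c /and3P[cC /eqP wc ci] | none] //=.
by have [c [cC wc ci]] := C_cover i; move: (none c); rewrite cC wc eqxx ci.
Qed.

Let partner i : 'I_n := odflt i [pick j | (j != i) && (G i 0 j != 0)].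

Let partner_spec i : partner i != i /\ G i 0 (partner i) != 0.
Proof.
have [_ wG Gi] := G_spec i; have [j ji Gj] := wt2_partner wG Gi.
rewrite /partner; case: pickP => [k /andP[] | none] //=.
by move: (none j); rewrite ji Gj.
Qed.

Let G_supp i k : k != i -> k != partner i -> G i 0 k = 0.
Proof.
have [_ wG Gi] := G_spec i; have [pi Gp] := partner_spec i.
by apply: wt2_supp wG _ Gi Gp; rewrite eq_sym.
Qed.

Let G_prop i v : v \in C -> v 0 i * G i 0 (partner i) = v 0 (partner i) * G i 0 i.
Proof.
have [GC wG Gi] := G_spec i; have [pi Gp] := partner_spec i.
by apply: C_prop; rewrite // eq_sym.
Qed.

Let partnerK : involutive partner.
Proof.
move=> i; have [_ _ Gi] := G_spec i; have [pi Gp] := partner_spec i.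
have [GC' _ G'p] := G_spec (partner i).
have G'i : G (partner i) 0 i != 0.
  by have := G_prop i GC'; apply: contra_eqN => /eqP->; rewrite mul0r eq_sym mulf_neq0.
apply/eqP; apply: contraT => ne; rewrite eq_sym in pi.
by rewrite (G_supp pi) ?eqxx // eq_sym in G'i.
Qed.

Section Pairing.
Variable f : 'S_n.
Hypothesis f_half : forall i j, ((f i)./2 == (f j)./2) = (j == i) || (j == partner i).
Hypothesis f_odd : forall i, odd (f (partner i)) = ~~ odd (f i).

Let rep i := if odd (f i) then partner i else i.
Let scale i := if odd (f i) then G i 0 (partner i) / G i 0 i else 1.

Let scale_neq0 i : scale i != 0.
Proof.
rewrite /scale; case: ifP => _; last exact: oner_neq0.
by have [_ _ Gi] := G_spec i; have [_ Gp] := partner_spec i; rewrite mulf_neq0 ?invr_eq0.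
Qed.

Let scale_rep i v : v \in C -> scale i * v 0 i = v 0 (rep i).
Proof.
move=> vC; rewrite /scale /rep; case: ifP => _; last by rewrite mul1r.
by have [_ _ Gi] := G_spec i; rewrite mulrAC [_ * v 0 i]mulrC G_prop // mulfK.
Qed.

Let rep_even i : ~~ odd (f (rep i)).
Proof. by rewrite /rep; case: ifP => [odd_i|->]; rewrite ?f_odd ?odd_i. Qed.

Let half_rep i : (f (rep i))./2 = (f i)./2.
Proof. by rewrite /rep; case: ifP => // _; apply/eqP; rewrite f_half partnerK eqxx orbT. Qed.

Let rep_eq i j : (f i)./2 = (f j)./2 -> rep i = rep j.
Proof.
move/eqP; rewrite f_half => /orP[] /eqP->; rewrite // /rep f_odd partnerK.
by case: ifP.
Qed.

Let G_even r r' : ~~ odd (f r) -> ~~ odd (f r') -> r' != r -> G r 0 r' = 0.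
Proof.
move=> r_even r'_even r'r; apply: G_supp r'r _.
by apply: contraNneq r'_even => ->; rewrite f_odd.
Qed.

Let lift w := \sum_(r | ~~ odd (f r)) (w 0 (f r) / G r 0 r) *: G r.

Let lift_in w : lift w \in C.
Proof. by apply: memv_suml => r _; apply: memvZ; have [] := G_spec r. Qed.

Let lift_even w r : ~~ odd (f r) -> lift w 0 r = w 0 (f r).
Proof.
move=> r_even; rewrite summxE (bigD1 r) //= big1 ?addr0.
  by rewrite !mxE divfK //; have [] := G_spec r.
by move=> r' /andP[r'_even r'r]; rewrite !mxE (G_even r'_even r_even) ?mulr0 // eq_sym.
Qed.

Lemma mon_equiv_pair_code_of_pairing : ~~ odd n -> mon_equiv C (pair_code F n).
Proof.
move=> n_even; exists (scale \o f^-1%g), f^-1%g; split => [j|w]; first exact: scale_neq0.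
have mon_rep v j : v \in C ->
    monomial_map (scale \o f^-1%g) f^-1%g v 0 j = v 0 (rep (f^-1%g j)).
  by move=> vC; rewrite mxE scale_rep.
split => [wP | [v vC ->]].
  exists (lift w) => //; apply/rowP => j; rewrite mon_rep // lift_even //.
  by apply: (pair_codeP _ n_even).1 => //; rewrite half_rep permKV.
apply/pair_codeP => // j j' jj'; rewrite !mon_rep //; congr (v 0 _).
by apply: rep_eq; rewrite !permKV.
Qed.

End Pairing.

Lemma mon_equiv_pair_code : ~~ odd n -> mon_equiv C (pair_code F n).
Proof.
have partner_neq i : partner i != i by have [] := partner_spec i.
have [f f_half f_odd] := involution_pairing partnerK partner_neq.
exact: mon_equiv_pair_code_of_pairing f_half f_odd.
Qed.

End PairedCode.

Section WeightEnumerator.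
Variables (F : finFieldType) (n : nat) (C : {vspace 'rV[F]_n}).

Lemma coef_weight_enum (R : nzRingType) k :
  (weight_enum R C)`_k = #|[set c in C | (k == n - wt c)%N]|%:R.
Proof.
rewrite /weight_enum coef_sum; under eq_bigr => c _ do rewrite coefXn.
by rewrite -natr_sum card_set_sum.
Qed.

Lemma weight_enum_wt_even (R : numDomainType) : ~~ odd n ->
  (forall k, odd k -> (weight_enum R C)`_k = 0) -> forall c, c \in C -> ~~ odd (wt c).
Proof.
move=> n_even coef_odd c cC; apply: contraT; rewrite negbK => wt_odd.
have : odd (n - wt c) by rewrite oddB ?wt_le // (negbTE n_even) wt_odd.
move/coef_odd/eqP; rewrite coef_weight_enum pnatr_eq0 cards_eq0 => /eqP/setP/(_ c).
by rewrite !inE cC eqxx.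
Qed.

Lemma card_wt2_words (R : nzRingType) : (2 <= n)%N ->
  #|wt2_words C|%:R = (weight_enum R C)`_(n - 2).
Proof.
move=> n_ge2; rewrite coef_weight_enum; congr _%:R; apply: eq_card => c.
by rewrite !inE; have := wt_le c; case: (c \in C) => //= ?; apply/eqP/eqP; lia.
Qed.

End WeightEnumerator.

Lemma coef_X2D_exp (R : comNzRingType) (a : R) m k : (('X^2 + a%:P) ^+ m)`_k =
  \sum_(i < m.+1) (a ^+ (m - i) * (k == (2 * i)%N)%:R) *+ 'C(m, i).
Proof.
rewrite addrC exprDn coef_sum; apply: eq_bigr => i _.
by rewrite coefMn -rmorphXn coefCM -exprM coefXn.
Qed.

Lemma coef_X2D_exp_odd (R : comNzRingType) (a : R) m k : odd k -> (('X^2 + a%:P) ^+ m)`_k = 0.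
Proof.
move=> k_odd; rewrite coef_X2D_exp big1 // => i _.
rewrite (_ : k == _ = false) ?mulr0 ?mul0rn //.
by apply: contraTF k_odd => /eqP->; rewrite oddM.
Qed.

Lemma coef_X2D_expS_subleading (R : comNzRingType) (a : R) m :
  (('X^2 + a%:P) ^+ m.+1)`_(2 * m) = a *+ m.+1.
Proof.
rewrite coef_X2D_exp big_ord_recr /= big_ord_recr /= big1 ?add0r => [|i _].
  rewrite (_ : (2 * m == 2 * m.+1)%N = false); last by apply/negbTE; lia.
  by rewrite eqxx mulr0 mul0rn addr0 mulr1 subSnn expr1 binSn.
rewrite (_ : (2 * m == 2 * i)%N = false) ?mulr0 ?mul0rn //.
by apply/negbTE; have := ltn_ord i; lia.
Qed.

Lemma dvdp_X2D_exp_eq (R : idomainType) (a b : R) m : (0 < m)%N ->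
  'X^2 + b%:P %| ('X^2 + a%:P) ^+ m -> a = b.
Proof.
(* Modulo X^2 + b, the polynomial X^2 + a is congruent to the constant a - b. *)
move=> m_gt0 dvd; pose r := ((a - b) ^+ m)%:P.
have dvd_sub : 'X^2 + b%:P %| ('X^2 + a%:P) ^+ m - r.
  have -> : 'X^2 + b%:P = 'X^2 + a%:P - (a - b)%:P.
    by rewrite polyCB opprB addrCA addrK addrC.
  by rewrite /r rmorphXn subrXX dvdp_mulIl.
have : 'X^2 + b%:P %| r by rewrite -(dvdp_addr _ dvd_sub) addrNK.
have [r0 | r_neq0 /(dvdp_leq r_neq0)] := eqVneq r 0.
  by move: r0 => /eqP; rewrite polyC_eq0 expf_eq0 m_gt0 subr_eq0 => /eqP.
by rewrite size_XnaddC // => /leq_trans/(_ (size_polyC_leq1 _)).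
Qed.

Theorem lemma3p3 (R : realFieldType) (F : finFieldType) (n : nat)
  (C : {vspace 'rV[F]_n}) (a : R) :
  (0 < n)%N -> ~~ odd n -> #|F| != 2%N -> a != 0 ->
  weight_enum R C = ('X ^+ 2 + a%:P) ^+ n./2 ->
  a = (#|F| - 1)%:R /\ mon_equiv C (pair_code F n).
Proof.
move=> n_gt0 n_even q_neq2 a_neq0 W_eq.
have F_gt2 : (2 < #|F|)%N by rewrite ltn_neqAle eq_sym q_neq2 card_finNzRing_gt1.
have [m n_half] : exists m, n./2 = m.+1.
  by exists n./2.-1; have := odd_double_half n; rewrite (negbTE n_even); lia.
have n_eq : n = (m.+1).*2 by rewrite -n_half even_halfK.
have C_even : forall c, c \in C -> ~~ odd (wt c).
  by apply: (weight_enum_wt_even (R := R)) => // k k_odd; rewrite W_eq coef_X2D_exp_odd.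
have card_W : #|wt2_words C|%:R = a *+ m.+1 :> R.
  rewrite card_wt2_words ?n_eq // W_eq n_half (_ : n - 2 = 2 * m)%N.
    exact: coef_X2D_expS_subleading.
  by rewrite n_eq -mul2n mulnS addKn.
have : #|wt2_words C|%:R != 0 :> R by rewrite card_W mulrn_eq0 negb_or a_neq0.
rewrite pnatr_eq0 -lt0n => /card_gt0P[g]; rewrite inE => /andP[gC /eqP wg].
have [i [j [ij gi gj]]] := wt2_support wg.
have a_eq : a = (#|F| - 1)%:R.
  apply: (@dvdp_X2D_exp_eq _ _ _ m.+1) => //.
  have q_neq0 : #|F|%:R != 0 :> R by rewrite pnatr_eq0 -lt0n ltnW // ltnW.
  rewrite -(dvdpZr _ _ q_neq0) scaler_nat -n_half -W_eq.
  by rewrite (weight_enum_orbit F_gt2 C_even _ gC wg ij gi gj) dvdp_mulIl.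
have card_W_nat : #|wt2_words C| = (n./2 * (#|F| - 1))%N.
  by apply/eqP; rewrite -(eqr_nat R) card_W a_eq n_half natrM mulr_natl.
split => //; apply: mon_equiv_pair_code => //; first exact: wt2_proportional.
exact: wt2_cover card_W_nat n_even.
Qed.
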